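(* Let $c,d\in\mathbb{Z}$ and $T=T(c,d,0,0)$, i.e. $T_{r,k}=c+rkd$ for all $r,k\ge 0$. Then for all $r\ge 1$ and $k\ge 2$, $$T_{r,k}=T_{r-1,k-1}+T_{0,r+k-2}+T_{1,r+k-3}+2(d-c).$$
   Context: A number triangle is an array of integers $T_{r,k}$ indexed by integers $r,k\ge 0$. For $c,d,d_1,d_2\in\mathbb{Z}$, the Generalized Rascal Triangle $T(c,d,d_1,d_2)$ is the number triangle with $T_{r,k}=c+kd_1+rd_2+rkd$. *)

From Stdlib Require Import ZArith.
Open Scope Z_scope.

Definition GRT (c d d1 d2 : Z) (r k : nat) : Z :=
  c + Z.of_nat k * d1 + Z.of_nat r * d2 + Z.of_nat r * Z.of_nat k * d.

From Stdlib Require Import ZArith Lia.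
Open Scope Z_scope.

Theorem mainTheorem13 (c d : Z) (r k : nat) :
  (1 <= r)%nat -> (2 <= k)%nat ->
  GRT c d 0 0 r k =
    GRT c d 0 0 (r - 1) (k - 1) + GRT c d 0 0 0 (r + k - 2)
    + GRT c d 0 0 1 (r + k - 3) + 2 * (d - c).
Proof.
  intros Hr Hk; unfold GRT.
  (* The identity is a polynomial one over Z; the bounds on r and k only make
     the truncated subtractions on nat agree with those on Z. *)
  rewrite !Nat2Z.inj_sub, !Nat2Z.inj_add by lia.
  simpl Z.of_nat; ring.
Qed.
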